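(* For $(c,d)\in\mathbb{C}\times\mathbb{C}^*$ let $f_{c,d}(z) = 1 + \frac cz + \frac d{z^2}$ and identify $(c,d)$ with $[c:d:1]\in\mathbb{CP}^2$. For $n\ge 1$ let $\mathcal{X}_n$ be the set of $(c,d)\in\mathbb{C}\times\mathbb{C}^*$ such that $0$ is periodic under $f_{c,d}$ with period dividing $n$, and $\overline{\mathcal{X}_n}$ its closure in $\mathbb{CP}^2$. Let $n\ge 3$. If $[c:0:1]\in\overline{\mathcal{X}_n}$, then $c^{-1} = -4\cos^2(\pi p/q)$ for some integers $1\le p<q\le n$ with $\gcd(p,q)=1$ and $q\ne 2$. *)

From HB Require Import structures.
From mathcomp Require Import all_boot all_order all_algebra.
From mathcomp Require Import complex.
From mathcomp Require Import all_classical all_reals all_analysis.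
Set Implicit Arguments. Unset Strict Implicit. Unset Printing Implicit Defensive.
Import Order.TTheory GRing.Theory Num.Theory.
Import numFieldNormedType.Exports.
Local Open Scope ring_scope.
Local Open Scope complex_scope.

(* The Riemann sphere C ∪ {∞}: [Some z] is z, [None] is ∞. *)
Definition sphere (R : rcfType) := option R[i].

Definition fcd (R : rcfType) (c d : R[i]) (z : sphere R) : sphere R :=
  match z with
  | None => Some 1
  | Some w => if w == 0 then None else Some (1 + c / w + d / (w ^+ 2))
  end.

Definition Xn (R : rcfType) (n : nat) : set ((R[i])^o * (R[i])^o) :=
  [set p | p.2 != 0 /\ iter n (fcd p.1 p.2) (Some 0) = Some 0].

(* For d = 0 the map f_{c,0}(z) = 1 + c/z is a Möbius transformation, and the
   orbit 1, f(1), f^2(1), ... of f^2(0) = 1 is a_{j+2}/a_{j+1} for the Lucas-type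
   sequence a_0 = 0, a_1 = 1, a_{j+2} = a_{j+1} + c a_j.  The orbit depends
   continuously on (c, d) as long as it avoids 0, so a point (c, 0) in the closure
   of X_n must have a_m = 0 for some 2 <= m <= n.  By Binet's formula this means
   that the ratio z of the two roots of X^2 - X - c is an m-th root of unity other
   than 1, and then -1/c = z + 2 + 1/z = 4 cos^2(pi j/m).  Reducing j/m gives p/q;
   q = 2 would force 1/c = 0. *)

From HB Require Import structures.
From mathcomp Require Import all_boot all_order all_algebra.
From mathcomp Require Import complex.
From mathcomp Require Import all_classical all_reals all_analysis.
From mathcomp Require Import ring lra.
Set Implicit Arguments. Unset Strict Implicit. Unset Printing Implicit Defensive.
Import Order.TTheory GRing.Theory Num.Theory.
Import numFieldNormedType.Exports.
Local Open Scope ring_scope.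
Local Open Scope complex_scope.

Lemma nat_ind2 (P : nat -> Prop) :
  P 0%N -> P 1%N -> (forall j, P j -> P j.+1 -> P j.+2) -> forall j, P j.
Proof.
move=> P0 P1 PSS j; suff: P j /\ P j.+1 by case.
by elim: j => [|j [Pj Pj1]]; split=> //; apply: PSS.
Qed.

Section Lucas.
Variable R : comNzRingType.

Fixpoint lucas (c : R) (j : nat) : R :=
  if j is j'.+1 then
    if j' is j''.+1 then lucas c j' + c * lucas c j'' else 1
  else 0.

Lemma lucasSS c j : lucas c j.+2 = lucas c j.+1 + c * lucas c j.
Proof. by []. Qed.

Lemma lucas0_succ j : lucas 0 j.+1 = 1.
Proof. by elim: j => // j IH; rewrite lucasSS IH mul0r addr0. Qed.

Lemma lucas_binet c l u j : l + u = 1 -> l * u = - c ->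
  (l - u) * lucas c j = l ^+ j - u ^+ j.
Proof.
move=> Dlu Mlu.
have Dc : c = - (l * u) by rewrite Mlu opprK.
have Du : u = 1 - l by rewrite -Dlu addrAC subrr add0r.
elim/nat_ind2: j => [||j IH0 IH1]; first by rewrite mulr0 !expr0 subrr.
  by rewrite mulr1 !expr1.
rewrite lucasSS mulrDr IH1 mulrCA IH0 Dc Du !exprS; ring.
Qed.

Lemma lucas_double_root c l j : l *+ 2 = 1 -> l ^+ 2 = - c ->
  lucas c j.+1 = j.+1%:R * l ^+ j.
Proof.
move=> l2 Dc; have {}Dc : c = - l ^+ 2 by rewrite Dc opprK.
elim/nat_ind2: j => [||j IH0 IH1]; first by rewrite /= expr0 mulr1.
  by rewrite lucasSS /= mulr0 addr0 expr1 mulr_natl l2.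
rewrite lucasSS IH1 IH0 Dc.
have -> : j.+2%:R * l ^+ j.+1 = j.+2%:R * l ^+ j.+1 * (l *+ 2) by rewrite l2 mulr1.
rewrite !exprS -[j.+3]addn3 -[j.+2]addn2 -[j.+1]addn1 !natrD; ring.
Qed.
End Lucas.

Section LucasZero.
Variable C : numClosedFieldType.

Lemma vieta_quadratic (c : C) : exists l u : C, l + u = 1 /\ l * u = - c.
Proof.
have h2 : (2%:R : C) != 0 by rewrite pnatr_eq0.
set s := sqrtC (1 + 4%:R * c); have Ds : s ^+ 2 = 1 + 4%:R * c by rewrite sqrtCK.
exists ((1 + s) / 2%:R), ((1 - s) / 2%:R); split; first by field.
have -> : c = (s ^+ 2 - 1) / 4%:R by rewrite Ds; field.
by field.
Qed.

Lemma lucas_eq0_root_unity (c : C) m : lucas c m.+1 = 0 ->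
  c != 0 /\ exists z : C, [/\ z ^+ m.+1 = 1, z != 1 & - c^-1 = z + 2%:R + z^-1].
Proof.
move=> a0.
have c0 : c != 0.
  by apply/eqP=> c0; move: a0; rewrite c0 lucas0_succ => /eqP; rewrite oner_eq0.
split=> //; have [l [u [Dlu Mlu]]] := vieta_quadratic c.
have [Elu|Nlu] := eqVneq l u.
  have l2 : l *+ 2 = 1 by rewrite mulr2n {2}Elu.
  have /lucas_double_root Dl : l ^+ 2 = - c by rewrite -Mlu -Elu expr2.
  move: a0; rewrite (Dl m l2) => /eqP; rewrite mulf_eq0 pnatr_eq0 expf_eq0 /=.
  by case/andP=> _ /eqP l0; move: l2; rewrite l0 mul0rn => /eqP; rewrite eq_sym oner_eq0.
have /norP[l0 u0] : ~~ ((l == 0) || (u == 0)) by rewrite -mulf_eq0 Mlu oppr_eq0.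
have /eqP lu_m : l ^+ m.+1 == u ^+ m.+1.
  by rewrite -subr_eq0 -(lucas_binet m.+1 Dlu Mlu) a0 mulr0.
exists (l / u); split.
- by rewrite exprMn exprVn lu_m mulfV // expf_neq0.
- by rewrite (can2_eq (divfK u0) (mulfK u0)) mul1r.
- have -> : c = - (l * u) by rewrite Mlu opprK.
  rewrite invrN opprK invf_div.
  have -> : (l * u)^-1 = (l + u) ^+ 2 / (l * u) by rewrite Dlu expr1n mul1r.
  by field; apply/andP.
Qed.
End LucasZero.

(* [orbit1 (c, d) j] is f_{c,d}^j(1) = f_{c,d}^{j+2}(0), computed with the affine
   formula, i.e. ignoring the pole at 0. *)
Fixpoint orbit1 (F : fieldType) (p : F * F) (j : nat) : F :=
  if j is j'.+1 then 1 + p.1 / orbit1 p j' + p.2 / orbit1 p j' ^+ 2 else 1.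

Lemma orbit1_lucas (F : fieldType) (c : F) j :
  (forall i, (i < j)%N -> orbit1 (c, 0) i != 0) ->
  lucas c j.+1 != 0 /\ orbit1 (c, 0) j = lucas c j.+2 / lucas c j.+1.
Proof.
elim: j => [|j IH] nz; first by rewrite /= mulr0 addr0 divr1 oner_neq0.
have [a0 Dj] := IH (fun i ij => nz i (ltnW ij)).
have a1 : lucas c j.+2 != 0.
  by move: (nz j (ltnSn j)); rewrite Dj; apply: contra => /eqP ->; rewrite mul0r.
split=> //; rewrite [LHS]/= Dj (lucasSS c j.+1) mul0r addr0.
by field; apply/andP.
Qed.

Lemma orbit1_eq0_lucas (F : fieldType) (c : F) k :
  (forall i, (i < k)%N -> orbit1 (c, 0) i != 0) -> orbit1 (c, 0) k = 0 ->
  lucas c k.+2 = 0.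
Proof.
move=> nz; have [a0 ->] := orbit1_lucas nz.
by move/eqP; rewrite mulf_eq0 invr_eq0 (negbTE a0) orbF => /eqP.
Qed.

Lemma iter_fcd_orbit1 (R : rcfType) (c d : R[i]) j :
  (forall i, (i < j)%N -> orbit1 (c, d) i != 0) ->
  iter j.+2 (fcd c d) (Some 0) = Some (orbit1 (c, d) j).
Proof.
elim: j => [|j IH] nz; first by rewrite /= eqxx.
rewrite iterS IH => [|i ij]; last exact/nz/ltnW.
by rewrite /= (negbTE (nz j (ltnSn j))).
Qed.

Section OrbitContinuity.
Local Open Scope classical_set_scope.
Variable R : realType.
Implicit Type q : (R[i])^o * (R[i])^o.

Lemma orbit1_cvg q j : (forall i, (i < j)%N -> orbit1 q i != 0) ->
  (orbit1 p j : (R[i])^o) @[p --> q] --> (orbit1 q j : (R[i])^o).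
Proof.
elim: j => [|j IH] nz; first exact: cvg_cst.
have qj0 : orbit1 q j != 0 by apply: nz.
have {}IH := IH (fun i ij => nz i (ltnW ij)).
apply: cvgD; first apply: cvgD; first exact: cvg_cst.
- by apply: cvgM; [exact: cvg_fst | exact: cvgV].
- by apply: cvgM; [exact: cvg_snd | apply: cvgV; [rewrite expf_neq0 | exact: cvgM]].
Qed.

Lemma near_orbit1_neq0 q k : (forall i, (i <= k)%N -> orbit1 q i != 0) ->
  \forall p \near q, forall i, (i <= k)%N -> orbit1 p i != 0.
Proof.
elim: k => [|k IH] nz.
  by near=> p => i; rewrite leqn0 => /eqP ->; exact: oner_neq0.
have near_lt := IH (fun i ik => nz i (leqW ik)).
have near_k := cvgr_neq0 _ (@orbit1_cvg q k.+1 (fun i ik => nz i (ltnW ik))) (nz _ (leqnn _)).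
near=> p => i; rewrite leq_eqVlt => /predU1P[->|]; first by near: p; exact: near_k.
by rewrite ltnS; move: i; near: p; exact: near_lt.
Unshelve. all: by end_near.
Qed.

Lemma closure_Xn_orbit1_eq0 n (c : R[i]) : (2 <= n)%N ->
  closure (@Xn R n) (c, 0) ->
  exists k, [/\ (k.+2 <= n)%N, orbit1 (c, 0) k = 0 &
                forall i, (i < k)%N -> orbit1 (c, 0) i != 0].
Proof.
move=> n2 clc.
have [/ex_minnP[k /andP[kn /eqP ok0] kmin]|none] :=
  pselect (exists k, (k.+2 <= n)%N && (orbit1 (c, 0) k == 0)).
  exists k; split=> // i ik; apply/eqP=> oi0.
  have /kmin : (i.+2 <= n)%N && (orbit1 (c, 0) i == 0).
    by rewrite oi0 eqxx andbT (leq_trans _ kn) // !ltnS ltnW.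
  by rewrite leqNgt ik.
have Dn : n = (n - 2).+2 by rewrite -addn2 subnK.
have nz : forall i, (i <= n - 2)%N -> orbit1 (c, 0) i != 0.
  move=> i ile; apply: contra_notN none => /eqP oi0.
  by exists i; rewrite oi0 eqxx andbT [X in (_ <= X)%N]Dn !ltnS.
have [[a b] [[/= b0 Xab] near_ab]] := clc _ (near_orbit1_neq0 nz).
move: Xab; rewrite Dn iter_fcd_orbit1 => [[/eqP]|i /ltnW]; last exact: near_ab.
by rewrite (negbTE (near_ab _ (leqnn _))).
Qed.
End OrbitContinuity.

Lemma norm_root_unity (C : numDomainType) (z : C) m :
  (0 < m)%N -> z ^+ m = 1 -> `|z| = 1.
Proof.
by move=> m0 zm; apply/eqP; rewrite -(pexpr_eq1 m0) ?normr_ge0 // -normrX zm normr1.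
Qed.

Section Cis.
Variable R : realType.

Definition cis (t : R) : R[i] := cos t +i* sin t.

Lemma cisD (t u : R) : cis (t + u) = cis t * cis u.
Proof. by rewrite /cis cosD sinD; simpc; rewrite (addrC (sin t * _)). Qed.

Lemma cisX (t : R) m : cis t ^+ m = cis (t *+ m).
Proof.
elim: m => [|m IH]; first by rewrite expr0 mulr0n /cis cos0 sin0.
by rewrite exprS IH mulrS cisD.
Qed.

Lemma cos_eq1_ge0 (t : R) : 0 <= t -> cos t = 1 -> exists j : nat, t = pi *+ 2 *+ j.
Proof.
move=> t0 ct1; have pi0 := pi_gt0 R.
set T := pi *+ 2; have T0 : 0 < T by rewrite mulrn_wgt0.
have /andP[jlo jhi] := truncn_itv (divr_ge0 t0 (ltW T0)).
set j := Num.truncn (t / T) in jlo jhi; exists j.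
set r := t - T *+ j.
have r0 : 0 <= r by rewrite subr_ge0 -mulr_natr mulrC -ler_pdivlMr.
have rT : r < T by rewrite ltrBlDr -mulrS -mulr_natr mulrC -ltr_pdivrMr.
have cr1 : cos r = 1 by rewrite -ct1 -[t](subrK (T *+ j)) (periodicn (@cosD2pi R)).
suff : r = 0 by move/eqP; rewrite subr_eq0 => /eqP.
have zero_in : (0 : R) \in `[0, pi] by rewrite in_itv /= lexx ltW.
have [rpi|pir] := lerP r pi.
  by apply: cos_inj; rewrite ?cos0 // in_itv /= r0 rpi.
suff : T - r = 0 by rewrite /T in rT *; lra.
apply: cos_inj => //; first by rewrite in_itv /=; rewrite /T in rT *; apply/andP; split; lra.
by rewrite cos0 addrC cosD2pi cosN.
Qed.

Lemma unit_complex_cis (z : R[i]) : `|z| = 1 ->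
  exists2 t : R, 0 <= t <= pi & z = cis t \/ z = cis (- t).
Proof.
case: z => x y; rewrite normc_def /= => -[] /(congr1 (fun r => r ^+ 2)).
rewrite sqr_sqrtr ?addr_ge0 ?sqr_ge0 // expr1n => xy1.
have x_in : -1 <= x <= 1 by apply/andP; split; nra.
exists (acos x); first by rewrite acos_ge0 ?acos_lepi.
have sx : sin (acos x) = `|y|.
  by rewrite sin_acos // -sqrtr_sqr -xy1 addrAC subrr add0r.
have cx : cos (acos x) = x by rewrite acosK // in_itv.
have [y0|y0] := lerP 0 y; [left|right]; rewrite /cis ?cosN ?sinN cx sx.
- by rewrite ger0_norm.
- by rewrite ltr0_norm ?opprK.
Qed.

Lemma root_unity_Re (z : R[i]) m : (0 < m)%N -> z ^+ m = 1 -> z != 1 ->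
  exists j : nat, [/\ (0 < j)%N, (j.*2 <= m)%N & complex.Re z = cos ((pi * j%:R / m%:R) *+ 2)].
Proof.
move=> m0 zm1 z1.
have [t /andP[t0 tpi] zt] := unit_complex_cis (norm_root_unity m0 zm1).
have Rez : complex.Re z = cos t by case: zt => ->; rewrite /= ?cosN.
have : cos (t *+ m) = 1.
  by rewrite -[RHS]/(complex.Re 1) -zm1; case: zt => ->; rewrite cisX //= mulNrn cosN.
case/(cos_eq1_ge0 (mulrn_wge0 _ t0)) => j tmj.
have m0' : (m%:R : R) != 0 by rewrite pnatr_eq0 -lt0n.
have Dt : t = (pi * j%:R / m%:R) *+ 2.
  rewrite -[t](mulfK m0') [t * _]mulr_natr tmj -mulrnA.
  by rewrite -[pi *+ _]mulr_natr -[RHS]mulr_natr natrM; field.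
exists j; split; last by rewrite Rez Dt.
- rewrite lt0n; apply: contraNneq z1 => j0.
  by move: zt; rewrite Dt j0 mulr0 mul0r mul0rn oppr0 /cis cos0 sin0 => -[] ->.
- have : (pi : R) *+ 2 *+ j <= pi *+ m by rewrite -tmj lerMn2r tpi orbT.
  by rewrite -mulrnA -[pi *+ (2 * j)]mulr_natr -[pi *+ m]mulr_natr ler_pM2l ?pi_gt0 // ler_nat mul2n.
Qed.

Lemma add_inv_unit_cos (z : R[i]) (t : R) : `|z| = 1 -> complex.Re z = cos (t *+ 2) ->
  z + 2%:R + z^-1 = 4%:R * (cos t ^+ 2)%:C.
Proof.
move=> z1 Rez; rewrite invc_norm z1 expr1n invr1 mul1r addrAC addcJ Rez cos_mulr2n.
have -> : 4%:R * (cos t ^+ 2)%:C = (4%:R * cos t ^+ 2)%:C :> R[i].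
  by rewrite -[4%:R in LHS](rmorph_nat (real_complex R)) -rmorphM.
by rewrite -(rmorph_nat (real_complex R)) -rmorphM -rmorphD; congr (_%:C); ring.
Qed.
End Cis.

Lemma coprime_fraction (F : numFieldType) (j m : nat) : (0 < j < m)%N ->
  exists p q : nat,
    [/\ (0 < p < q)%N, (q <= m)%N, coprime p q & p%:R / q%:R = j%:R / m%:R :> F].
Proof.
case/andP=> j0 jm; set g := gcdn j m.
have g0 : (0 < g)%N by rewrite gcdn_gt0 j0.
have Dj : j = (j %/ g * g)%N by rewrite divnK // dvdn_gcdl.
have Dm : m = (m %/ g * g)%N by rewrite divnK // dvdn_gcdr.
have pq : (j %/ g < m %/ g)%N by rewrite -(ltn_pmul2r g0) -Dj -Dm.
exists (j %/ g)%N, (m %/ g)%N; split=> //.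
- by rewrite pq andbT -(ltn_pmul2r g0) -Dj.
- exact: leq_div.
- by rewrite /coprime -(eqn_pmul2r g0) muln_gcdl -Dj -Dm mul1n.
- have q0 : ((m %/ g)%:R : F) != 0 by rewrite pnatr_eq0 -lt0n (leq_ltn_trans _ pq).
  have g0' : (g%:R : F) != 0 by rewrite pnatr_eq0 -lt0n.
  by rewrite [in RHS]Dj [in RHS]Dm !natrM; field; apply/andP.
Qed.

Theorem lemma2p3 (R : realType) (n : nat) (c : R[i]) :
  (3 <= n)%N ->
  closure (@Xn R n) (c, 0) ->
  exists p q : nat,
    [/\ (1 <= p < q)%N, (q <= n)%N, coprime p q, q != 2%N &
        c^-1 = - 4%:R * ((cos (pi * p%:R / q%:R : R)) ^+ 2)%:C].
Proof.
move=> n3 clc.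
have [k [kn ok0 nz]] := closure_Xn_orbit1_eq0 (ltnW n3) clc.
have [c0 [z [zm z1 Dc]]] := lucas_eq0_root_unity (orbit1_eq0_lucas nz ok0).
have [j [j0 jm Rez]] := root_unity_Re (ltn0Sn k.+1) zm z1.
have Dc' : c^-1 = - 4%:R * (cos (pi * j%:R / k.+2%:R) ^+ 2)%:C.
  by rewrite -[c^-1]opprK Dc (add_inv_unit_cos (norm_root_unity (ltn0Sn _) zm) Rez); ring.
have jm' : (0 < j < k.+2)%N by rewrite j0 (leq_trans _ jm) // -addnn -{1}(addn0 j) ltn_add2l.
have [p [q [/andP[p0 pq] qm cop Epq]]] := coprime_fraction R jm'.
have Dcpq : c^-1 = - 4%:R * (cos (pi * p%:R / q%:R) ^+ 2)%:C by rewrite -mulrA Epq mulrA.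
exists p, q; split=> //; first by rewrite p0.
- exact: leq_trans qm kn.
- apply: contraNneq c0 => q2; have p1 : p = 1%N by apply/eqP; rewrite eqn_leq -ltnS -q2 pq.
  by rewrite -invr_eq0 Dcpq p1 q2 mulr1 cos_pihalf expr0n /= mulr0.
Qed.
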